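(* Every forward complete control system $\Sigma=(X,\mathcal U,\phi)$ that is input-to-state stable (ISS) is norm-to-integral ISS.
   Context: Let $X$, $U$ be Banach spaces and let $\mathcal U$ be a normed vector space of functions $\mathbb R_+\to U$ satisfying: (shift invariance) for all $u\in\mathcal U$ and $\tau\ge0$, $u(\cdot+\tau)\in\mathcal U$ and $\|u(\cdot+\tau)\|_{\mathcal U}\le\|u\|_{\mathcal U}$; (concatenation) for all $u_1,u_2\in\mathcal U$ and $t>0$ the function equal to $u_1(\tau)$ for $\tau\in[0,t]$ and to $u_2(\tau-t)$ for $\tau>t$ belongs to $\mathcal U$. A forward complete control system is a triple $\Sigma=(X,\mathcal U,\phi)$ with $\phi:\mathbb R_+\times X\times\mathcal U\to X$ such that: $\phi(0,x,u)=x$; (causality) $\phi(t,x,u)=\phi(t,x,\tilde u)$ whenever $u|_{[0,t]}=\tilde u|_{[0,t]}$; for each $(x,u)$ the map $t\mapsto\phi(t,x,u)$ is continuous; (cocycle) $\phi(h,\phi(t,x,u),u(t+\cdot))=\phi(t+h,x,u)$ for all $t,h\ge0$, $x\in X$, $u\in\mathcal U$. Comparison functions: $\mathcal K$ = continuous strictly increasing $\gamma:\mathbb R_+\to\mathbb R_+$ with $\gamma(0)=0$; $\mathcal K_\infty$ = unbounded functions in $\mathcal K$; $\mathcal L$ = continuous strictly decreasing $\gamma:\mathbb R_+\to\mathbb R_+$ with $\gamma(t)\to0$; $\mathcal{KL}$ = $\beta:\mathbb R_+^2\to\mathbb R_+$ with $\beta(\cdot,t)\in\mathcal K$ for all $t\ge0$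 and $\beta(r,\cdot)\in\mathcal L$ for all $r>0$. $\Sigma$ is ISS if there are $\beta\in\mathcal{KL}$, $\gamma\in\mathcal K$ with $\|\phi(t,x,u)\|_X\le\beta(\|x\|_X,t)+\gamma(\|u\|_{\mathcal U})$ for all $x\in X$, $u\in\mathcal U$, $t\ge0$. $\Sigma$ is norm-to-integral ISS if there are $\alpha\in\mathcal K$, $\psi,\sigma\in\mathcal K_\infty$ with $\int_0^t\alpha(\|\phi(s,x,u)\|_X)\,ds\le\psi(\|x\|_X)+t\,\sigma(\|u\|_{\mathcal U})$ for all $x\in X$, $u\in\mathcal U$, $t\ge0$. *)

From Stdlib Require Export Reals.
Open Scope R_scope.

Record NormedSpace := {
  ns_car :> Type;
  ns_zero : ns_car;
  ns_add : ns_car -> ns_car -> ns_car;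
  ns_opp : ns_car -> ns_car;
  ns_scal : R -> ns_car -> ns_car;
  ns_norm : ns_car -> R;
  ns_add_assoc : forall a b c, ns_add a (ns_add b c) = ns_add (ns_add a b) c;
  ns_add_comm : forall a b, ns_add a b = ns_add b a;
  ns_add_zero : forall a, ns_add a ns_zero = a;
  ns_add_opp : forall a, ns_add a (ns_opp a) = ns_zero;
  ns_scal_one : forall a, ns_scal 1 a = a;
  ns_scal_assoc : forall k l a, ns_scal k (ns_scal l a) = ns_scal (k * l) a;
  ns_scal_distr_l : forall k a b, ns_scal k (ns_add a b) = ns_add (ns_scal k a) (ns_scal k b);
  ns_scal_distr_r : forall k l a, ns_scal (k + l) a = ns_add (ns_scal k a) (ns_scal l a);
  ns_norm_eq0 : forall a, ns_norm a = 0 -> a = ns_zero;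
  ns_norm_triangle : forall a b, ns_norm (ns_add a b) <= ns_norm a + ns_norm b;
  ns_norm_scal : forall k a, ns_norm (ns_scal k a) = Rabs k * ns_norm a
}.

Arguments ns_zero {_}.
Arguments ns_add {_} _ _.
Arguments ns_opp {_} _.
Arguments ns_scal {_} _ _.
Arguments ns_norm {_} _.

Definition ns_sub {X : NormedSpace} (a b : X) : X := ns_add a (ns_opp b).

Definition Banach (X : NormedSpace) : Prop :=
  forall s : nat -> X,
    (forall eps, eps > 0 -> exists N, forall m n, (m >= N)%nat -> (n >= N)%nat ->
        ns_norm (ns_sub (s m) (s n)) < eps) ->
    exists l : X, forall eps, eps > 0 -> exists N, forall n, (n >= N)%nat ->
        ns_norm (ns_sub (s n) l) < eps.

(** An element [u : UU] is the function [fun s => ev u s] restricted to [s >= 0];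
    [ev] is injective (as functions on R_+) and the vector operations of [UU]
    are the pointwise ones. *)
Definition input_function_space (U UU : NormedSpace) (ev : UU -> R -> U) : Prop :=
  (forall u v : UU, (forall s, 0 <= s -> ev u s = ev v s) -> u = v) /\
  (forall s, 0 <= s -> ev ns_zero s = ns_zero) /\
  (forall (u v : UU) s, 0 <= s -> ev (ns_add u v) s = ns_add (ev u s) (ev v s)) /\
  (forall (k : R) (u : UU) s, 0 <= s -> ev (ns_scal k u) s = ns_scal k (ev u s)) /\
  (forall (u : UU) tau, 0 <= tau ->
     exists v : UU, (forall s, 0 <= s -> ev v s = ev u (s + tau)) /\
                    ns_norm v <= ns_norm u) /\
  (forall (u1 u2 : UU) t, 0 < t ->
     exists w : UU, forall s, 0 <= s ->
        ev w s = if Rle_dec s t then ev u1 s else ev u2 (s - t)).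

(** * Forward complete control systems  Sigma = (X, UU, phi),
    with phi : R_+ x X x UU -> X (only times t >= 0 are meaningful). *)
Definition forward_complete_control_system (X U UU : NormedSpace)
    (ev : UU -> R -> U) (phi : R -> X -> UU -> X) : Prop :=
  (forall x u, phi 0 x u = x) /\
  (forall t x (u u' : UU), 0 <= t ->
     (forall s, 0 <= s <= t -> ev u s = ev u' s) -> phi t x u = phi t x u') /\
  (forall x u t eps, 0 <= t -> eps > 0 ->
     exists delta, delta > 0 /\ forall t', 0 <= t' -> Rabs (t' - t) < delta ->
        ns_norm (ns_sub (phi t' x u) (phi t x u)) < eps) /\
  (forall t h x (u v : UU), 0 <= t -> 0 <= h ->
     (forall s, 0 <= s -> ev v s = ev u (t + s)) ->
     phi h (phi t x u) v = phi (t + h) x u).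

(** * Comparison functions (functions R_+ -> R_+, modelled as R -> R,
    all properties being required on R_+ only). *)
Definition cont_on_nonneg (g : R -> R) : Prop :=
  forall x eps, 0 <= x -> eps > 0 ->
    exists delta, delta > 0 /\
      forall y, 0 <= y -> Rabs (y - x) < delta -> Rabs (g y - g x) < eps.

Definition class_K (g : R -> R) : Prop :=
  cont_on_nonneg g /\
  (forall x y, 0 <= x -> x < y -> g x < g y) /\
  g 0 = 0.

Definition class_Kinf (g : R -> R) : Prop :=
  class_K g /\ (forall M, exists x, 0 <= x /\ g x > M).

Definition class_L (g : R -> R) : Prop :=
  cont_on_nonneg g /\
  (forall x, 0 <= x -> 0 <= g x) /\
  (forall x y, 0 <= x -> x < y -> g y < g x) /\
  (forall eps, eps > 0 -> exists T, forall t, t >= T -> Rabs (g t) < eps).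

Definition class_KL (b : R -> R -> R) : Prop :=
  (forall t, 0 <= t -> class_K (fun r => b r t)) /\
  (forall r, 0 < r -> class_L (fun t => b r t)).

Definition ISS (X U UU : NormedSpace) (ev : UU -> R -> U)
    (phi : R -> X -> UU -> X) : Prop :=
  exists (beta : R -> R -> R) (gamma : R -> R),
    class_KL beta /\ class_K gamma /\
    forall (x : X) (u : UU) t, 0 <= t ->
      ns_norm (phi t x u) <= beta (ns_norm x) t + gamma (ns_norm u).

(** The integral is the Riemann integral over [0, t]; the statement asserts
    that the integrand is Riemann integrable and bounds the integral. *)
Definition norm_to_integral_ISS (X U UU : NormedSpace) (ev : UU -> R -> U)
    (phi : R -> X -> UU -> X) : Prop :=
  exists (alpha psi sigma : R -> R),
    class_K alpha /\ class_Kinf psi /\ class_Kinf sigma /\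
    forall (x : X) (u : UU) t, 0 <= t ->
      exists pr : Riemann_integrable (fun s => alpha (ns_norm (phi s x u))) 0 t,
        RiemannInt pr <= psi (ns_norm x) + t * sigma (ns_norm u).

(* ISS gives alpha(|phi s|) <= alpha(2 beta(|x|, s)) + alpha(2 gamma(|u|)) for every
   alpha in K, so it suffices to find alpha in K for which the integral of
   s |-> alpha(2 beta(r, s)) over R_+ is bounded by a K function of r.
   Choose times T_j after which 2 beta(j, .) <= 1/j, and make alpha so flat at 0 that
   alpha(1/j) (T_(j+1) - T_j) <= 2^-j.  Then for every integer c >= r the integral is
   at most alpha(2 beta(r, 0)) T_c + 2^(1-c).  Taking c about 1/(2 beta(r, 0)) when
   beta(r, 0) is small, and c about r otherwise, yields a bound dominated by a
   continuous increasing function of r vanishing at 0.  Such flat alpha are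
   v |-> 1/H(1/v) for a piecewise-linear H exceeding a given sequence at the integers. *)

From Stdlib Require Import Reals Lra Lia ZArith ClassicalEpsilon.
From Coquelicot Require Import Coquelicot.
Open Scope R_scope.

Definition nat_floor (r : R) : nat := Z.to_nat (Int_part r).

Lemma nat_floor_spec r : 0 <= r -> INR (nat_floor r) <= r < INR (nat_floor r) + 1.
Proof.
  intros r_ge0. destruct (base_Int_part r) as [Hle Hlt].
  assert (Int_ge0 : (0 <= Int_part r)%Z).
  { assert (-1 < Int_part r)%Z; [|lia]. apply lt_IZR. simpl. lra. }
  unfold nat_floor. rewrite INR_IZR_INZ, Z2Nat.id by exact Int_ge0. lra.
Qed.

Lemma nat_floor_unique k r : INR k <= r < INR k + 1 -> nat_floor r = k.
Proof.
  intros [Hk Hk1]. pose proof (pos_INR k).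
  destruct (nat_floor_spec r ltac:(lra)) as [Hf Hf1].
  destruct (Nat.lt_total (nat_floor r) k) as [Hlt|[Heq|Hlt]]; auto; exfalso.
  - apply (le_INR (S (nat_floor r))) in Hlt. rewrite S_INR in Hlt. lra.
  - apply (le_INR (S k)) in Hlt. rewrite S_INR in Hlt. lra.
Qed.

Lemma nat_floor_le x y : 0 <= x -> x <= y -> (nat_floor x <= nat_floor y)%nat.
Proof.
  intros Hx Hxy. destruct (le_lt_dec (nat_floor x) (nat_floor y)) as [|Hlt]; auto. exfalso.
  apply (le_INR (S (nat_floor y))) in Hlt. rewrite S_INR in Hlt.
  pose proof (nat_floor_spec x Hx). pose proof (nat_floor_spec y ltac:(lra)). lra.
Qed.

Section DominatingFunction.
Variable D : nat -> R.

Fixpoint dom_node (n : nat) : R :=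
  match n with
  | O => 0
  | S i => dom_node i + 1 + Rmax 0 (D (S i) - dom_node i)
  end.

Definition dom_fun (r : R) : R :=
  let k := nat_floor r in dom_node k + (r - INR k) * (dom_node (S k) - dom_node k).

Lemma dom_node_step i : 1 <= dom_node (S i) - dom_node i.
Proof. simpl. pose proof (Rmax_l 0 (D (S i) - dom_node i)). lra. Qed.

Lemma dom_node_le i j : (i <= j)%nat -> dom_node i <= dom_node j.
Proof. induction 1; [lra|]. pose proof (dom_node_step m). lra. Qed.

Lemma dom_node_ge0 i : 0 <= dom_node i.
Proof. apply (dom_node_le 0 i). lia. Qed.

Lemma dom_node_ge i : D (S i) <= dom_node (S i).
Proof.
  simpl. pose proof (Rmax_r 0 (D (S i) - dom_node i)). pose proof (Rmax_l 0 (D (S i) - dom_node i)). lra.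
Qed.

Lemma dom_fun_segment k r : INR k <= r <= INR k + 1 ->
  dom_fun r = dom_node k + (r - INR k) * (dom_node (S k) - dom_node k).
Proof.
  intros [Hk Hk1]. destruct (Rlt_or_le r (INR k + 1)) as [Hlt|Hge].
  - unfold dom_fun. rewrite (nat_floor_unique k r) by lra. reflexivity.
  - assert (r = INR (S k)) by (rewrite S_INR; lra). subst r.
    unfold dom_fun. rewrite (nat_floor_unique (S k) (INR (S k))) by lra. rewrite S_INR. ring.
Qed.

Lemma dom_fun_nat k : dom_fun (INR k) = dom_node k.
Proof. rewrite (dom_fun_segment k (INR k)) by lra. ring. Qed.

Lemma dom_fun_slope x y : 0 <= x -> x <= y ->
  y - x <= dom_fun y - dom_fun x <= (y - x) * dom_node (S (nat_floor y)).
Proof.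
  intros Hx Hxy.
  assert (Hcross : forall n x, 0 <= x -> x <= y -> (nat_floor y <= nat_floor x + n)%nat ->
    y - x <= dom_fun y - dom_fun x <= (y - x) * dom_node (S (nat_floor y))).
  2: { apply (Hcross (nat_floor y)); auto. lia. }
  clear x Hx Hxy. induction n as [|n IH]; intros x Hx Hxy Hn.
  - pose proof (nat_floor_spec x Hx). pose proof (nat_floor_spec y ltac:(lra)).
    set (k := nat_floor x) in *.
    assert (Hyk : nat_floor y = k) by (pose proof (nat_floor_le x y Hx Hxy); lia).
    rewrite Hyk in *.
    rewrite (dom_fun_segment k x), (dom_fun_segment k y) by lra.
    pose proof (dom_node_step k). pose proof (dom_node_ge0 k).
    assert (0 <= y - x) by lra. nra.
  - destruct (le_lt_dec (nat_floor y) (nat_floor x + n)) as [Hle|Hlt]; [apply IH; auto|].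
    pose proof (nat_floor_spec x Hx) as Fx. set (k := nat_floor x) in *.
    set (z := INR k + 1).
    assert (Hz : INR (S k) <= INR (nat_floor y)) by (apply le_INR; lia).
    rewrite S_INR in Hz. pose proof (nat_floor_spec y ltac:(lra)).
    assert (Hxz : dom_fun z - dom_fun x = (z - x) * (dom_node (S k) - dom_node k)).
    { rewrite (dom_fun_segment k x), (dom_fun_segment k z) by (unfold z; lra). ring. }
    assert (Hzy : y - z <= dom_fun y - dom_fun z <= (y - z) * dom_node (S (nat_floor y))).
    { apply IH. unfold z; pose proof (pos_INR k); lra. unfold z; lra.
      rewrite (nat_floor_unique (S k) z) by (rewrite S_INR; unfold z; lra). lia. }
    pose proof (dom_node_step k). pose proof (dom_node_ge0 k).
    assert (dom_node (S k) <= dom_node (S (nat_floor y))) by (apply dom_node_le; lia).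
    unfold z in *. nra.
Qed.

Lemma dom_fun_continuous x : 0 < x -> continuity_pt dom_fun x.
Proof.
  intros Hx eps Heps.
  set (L := dom_node (S (nat_floor (x + 1)))).
  assert (HL : 1 <= L) by (pose proof (dom_node_step (nat_floor (x + 1))); pose proof (dom_node_ge0 (nat_floor (x + 1))); unfold L; lra).
  assert (HLy : forall y, 0 <= y <= x + 1 -> dom_node (S (nat_floor y)) <= L)
    by (intros y Hy; apply dom_node_le, le_n_S, nat_floor_le; lra).
  exists (Rmin x (Rmin 1 (eps / L))). split.
  { apply Rmin_pos; [lra|]. apply Rmin_pos; [lra|]. apply Rdiv_lt_0_compat; lra. }
  intros y [_ Hy]. simpl in Hy |- *. unfold Rdist in Hy |- *.
  pose proof (Rmin_l x (Rmin 1 (eps / L))). pose proof (Rmin_r x (Rmin 1 (eps / L))).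
  pose proof (Rmin_l 1 (eps / L)). pose proof (Rmin_r 1 (eps / L)).
  assert (HeL : eps / L * L = eps) by (field; lra).
  destruct (Rle_or_lt x y) as [Hxy|Hyx].
  - rewrite Rabs_pos_eq in Hy by lra.
    pose proof (dom_fun_slope x y ltac:(lra) Hxy). pose proof (HLy y ltac:(lra)).
    rewrite Rabs_pos_eq by lra. nra.
  - rewrite Rabs_left in Hy by lra.
    pose proof (dom_fun_slope y x ltac:(lra) ltac:(lra)). pose proof (HLy x ltac:(lra)).
    rewrite Rabs_left by lra. nra.
Qed.
End DominatingFunction.

Lemma exists_dominating_function (D : nat -> R) : exists H : R -> R,
  (forall x, 0 < x -> continuity_pt H x) /\
  (forall x y, 0 <= x <= y -> y - x <= H y - H x) /\ H 0 = 0 /\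
  (forall k, D (S k) <= H (INR (S k))).
Proof.
  exists (dom_fun D). split; [|split; [|split]].
  - apply dom_fun_continuous.
  - intros x y [Hx Hxy]. apply dom_fun_slope; auto.
  - apply (dom_fun_nat D 0).
  - intro k. rewrite dom_fun_nat. apply dom_node_ge.
Qed.

Section NormFacts.
Variable X : NormedSpace.
Implicit Types a b : X.

Lemma ns_scal0 a : ns_scal 0 a = ns_zero.
Proof.
  set (z := ns_scal 0 a).
  assert (Hzz : z = ns_add z z) by (unfold z; rewrite <- ns_scal_distr_r, Rplus_0_r; reflexivity).
  transitivity (ns_add (ns_add z z) (ns_opp z)).
  - rewrite <- ns_add_assoc, ns_add_opp, ns_add_zero. reflexivity.
  - rewrite <- Hzz. apply ns_add_opp.
Qed.

Lemma ns_norm0 : ns_norm (@ns_zero X) = 0.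
Proof. rewrite <- (ns_scal0 ns_zero), ns_norm_scal, Rabs_R0. ring. Qed.

Lemma ns_opp_scal a : ns_opp a = ns_scal (-1) a.
Proof.
  assert (Hinv : ns_add a (ns_scal (-1) a) = ns_zero).
  { rewrite <- (ns_scal_one X a) at 1. rewrite <- ns_scal_distr_r.
    replace (1 + -1) with 0 by ring. apply ns_scal0. }
  rewrite <- (ns_add_zero X (ns_opp a)), <- Hinv, ns_add_assoc.
  rewrite (ns_add_comm X (ns_opp a) a), ns_add_opp, ns_add_comm, ns_add_zero. reflexivity.
Qed.

Lemma ns_norm_opp a : ns_norm (ns_opp a) = ns_norm a.
Proof. rewrite ns_opp_scal, ns_norm_scal, Rabs_left by lra. ring. Qed.

Lemma ns_norm_ge0 a : 0 <= ns_norm a.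
Proof.
  pose proof (ns_norm_triangle X a (ns_opp a)) as Htri.
  rewrite ns_add_opp, ns_norm0, ns_norm_opp in Htri. lra.
Qed.

Lemma ns_sub_add a b : ns_add (ns_sub a b) b = a.
Proof.
  unfold ns_sub. rewrite <- ns_add_assoc, (ns_add_comm X (ns_opp b) b), ns_add_opp, ns_add_zero.
  reflexivity.
Qed.

Lemma ns_sub_swap a b : ns_sub b a = ns_opp (ns_sub a b).
Proof.
  unfold ns_sub. rewrite !ns_opp_scal, ns_scal_distr_l, ns_scal_assoc.
  replace (-1 * -1) with 1 by ring. rewrite ns_scal_one. apply ns_add_comm.
Qed.

Lemma ns_norm_sub_ge a b : Rabs (ns_norm a - ns_norm b) <= ns_norm (ns_sub a b).
Proof.
  pose proof (ns_norm_triangle X (ns_sub a b) b) as Ha. rewrite ns_sub_add in Ha.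
  pose proof (ns_norm_triangle X (ns_sub b a) a) as Hb. rewrite ns_sub_add in Hb.
  rewrite ns_sub_swap, ns_norm_opp in Hb.
  unfold Rabs. destruct (Rcase_abs _); lra.
Qed.

Lemma cont_on_nonneg_norm (y : R -> X) :
  (forall t eps, 0 <= t -> eps > 0 -> exists delta, delta > 0 /\
     forall t', 0 <= t' -> Rabs (t' - t) < delta -> ns_norm (ns_sub (y t') (y t)) < eps) ->
  cont_on_nonneg (fun t => ns_norm (y t)).
Proof.
  intros Hy t eps Ht Heps. destruct (Hy t eps Ht Heps) as [delta [Hdelta Hclose]].
  exists delta. split; auto. intros t' Ht' Htt'.
  eapply Rle_lt_trans; [apply ns_norm_sub_ge|apply Hclose; auto].
Qed.
End NormFacts.

(* [cont_on_nonneg f] is continuity of [f] extended to [R] by [f 0] on the left of 0. *)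
Lemma cont_on_nonneg_of_continuity_pt f :
  (forall x, 0 <= x -> continuity_pt (fun y => f (Rmax 0 y)) x) -> cont_on_nonneg f.
Proof.
  intros Hf x eps Hx Heps. destruct (Hf x Hx eps Heps) as [delta [Hdelta Hclose]].
  exists delta. split; [lra|]. intros y Hy Hyx.
  destruct (Req_dec y x) as [->|Hne]; [rewrite Rminus_diag, Rabs_R0; lra|].
  specialize (Hclose y). simpl in Hclose. unfold Rdist in Hclose.
  rewrite (Rmax_right 0 y Hy), (Rmax_right 0 x Hx) in Hclose.
  apply Hclose. repeat split; auto.
Qed.

Lemma continuity_pt_of_cont_on_nonneg f :
  cont_on_nonneg f -> forall x, 0 <= x -> continuity_pt (fun y => f (Rmax 0 y)) x.
Proof.
  intros Hf x Hx eps Heps. destruct (Hf x eps Hx Heps) as [delta [Hdelta Hclose]].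
  exists delta. split; [lra|]. intros y [_ Hy]. simpl in Hy |- *. unfold Rdist in Hy |- *.
  rewrite (Rmax_right 0 x Hx). apply Hclose; [apply Rmax_l|].
  unfold Rmax. destruct (Rle_dec 0 y); auto.
  rewrite Rabs_left in Hy by lra. unfold Rabs; destruct (Rcase_abs _); lra.
Qed.

Lemma cont_on_nonneg_plus f g :
  cont_on_nonneg f -> cont_on_nonneg g -> cont_on_nonneg (fun y => f y + g y).
Proof.
  intros Hf Hg. apply cont_on_nonneg_of_continuity_pt. intros x Hx.
  apply (continuity_pt_plus (fun y => f (Rmax 0 y)) (fun y => g (Rmax 0 y)));
    apply continuity_pt_of_cont_on_nonneg; auto.
Qed.

Lemma cont_on_nonneg_mult f g :
  cont_on_nonneg f -> cont_on_nonneg g -> cont_on_nonneg (fun y => f y * g y).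
Proof.
  intros Hf Hg. apply cont_on_nonneg_of_continuity_pt. intros x Hx.
  apply (continuity_pt_mult (fun y => f (Rmax 0 y)) (fun y => g (Rmax 0 y)));
    apply continuity_pt_of_cont_on_nonneg; auto.
Qed.

Lemma cont_on_nonneg_const c : cont_on_nonneg (fun _ => c).
Proof. intros x eps _ Heps. exists 1. split; [lra|]. intros. rewrite Rminus_diag, Rabs_R0. lra. Qed.

Lemma cont_on_nonneg_id : cont_on_nonneg (fun y => y).
Proof. intros x eps _ Heps. exists eps. split; [lra|]. auto. Qed.

Lemma cont_on_nonneg_comp g f : cont_on_nonneg g -> cont_on_nonneg f ->
  (forall y, 0 <= y -> 0 <= f y) -> cont_on_nonneg (fun y => g (f y)).
Proof.
  intros Hg Hf Hf0. apply cont_on_nonneg_of_continuity_pt. intros x Hx.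
  apply (continuity_pt_ext (comp (fun z => g (Rmax 0 z)) (fun y => f (Rmax 0 y)))).
  { intro y. unfold comp. rewrite (Rmax_right 0 (f (Rmax 0 y))); auto. apply Hf0, Rmax_l. }
  apply continuity_pt_comp; apply continuity_pt_of_cont_on_nonneg; auto. apply Hf0, Rmax_l.
Qed.

Lemma cont_on_nonneg_comp_continuity_pt g f :
  (forall x, 0 <= x -> continuity_pt g (f x)) -> cont_on_nonneg f ->
  cont_on_nonneg (fun y => g (f y)).
Proof.
  intros Hg Hf. apply cont_on_nonneg_of_continuity_pt. intros x Hx.
  apply (continuity_pt_comp (fun y => f (Rmax 0 y)) g).
  - apply continuity_pt_of_cont_on_nonneg; auto.
  - rewrite (Rmax_right 0 x Hx). auto.
Qed.

Lemma cont_on_nonneg_ex_RInt f a b : cont_on_nonneg f -> 0 <= a <= b -> ex_RInt f a b.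
Proof.
  intros Hf [Ha Hab]. apply (ex_RInt_ext (fun s => f (Rmax 0 s))).
  { intros z [Hz _]. rewrite Rmin_left in Hz by lra. rewrite Rmax_right by lra. reflexivity. }
  apply (@ex_RInt_continuous R_CompleteNormedModule). intros z [Hz _]. rewrite Rmin_left in Hz by lra.
  apply continuity_pt_filterlim, continuity_pt_of_cont_on_nonneg; auto; lra.
Qed.

Lemma K_ge0 g x : class_K g -> 0 <= x -> 0 <= g x.
Proof.
  intros [_ [Hincr Hg0]] Hx. destruct (Req_dec x 0) as [->|Hx0]; [lra|].
  pose proof (Hincr 0 x ltac:(lra) ltac:(lra)). lra.
Qed.

Lemma K_le g x y : class_K g -> 0 <= x -> x <= y -> g x <= g y.
Proof.
  intros [_ [Hincr _]] Hx Hxy. destruct (Req_dec x y) as [->|Hne]; [lra|].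
  apply Rlt_le, Hincr; lra.
Qed.

Lemma K_add_le g x y : class_K g -> 0 <= x -> 0 <= y -> g (x + y) <= g (2 * x) + g (2 * y).
Proof.
  intros Hg Hx Hy. pose proof (K_ge0 g (2 * x) Hg ltac:(lra)). pose proof (K_ge0 g (2 * y) Hg ltac:(lra)).
  destruct (Rle_dec x y).
  - pose proof (K_le g (x + y) (2 * y) Hg ltac:(lra) ltac:(lra)). lra.
  - pose proof (K_le g (x + y) (2 * x) Hg ltac:(lra) ltac:(lra)). lra.
Qed.

Lemma class_K_scal c g : 0 < c -> class_K g -> class_K (fun x => c * g x).
Proof.
  intros Hc Hg. pose proof Hg as [Hcont [Hincr Hg0]]. split; [|split].
  - apply cont_on_nonneg_mult; [apply cont_on_nonneg_const|exact Hcont].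
  - intros x y Hx Hxy. apply Rmult_lt_compat_l; auto.
  - rewrite Hg0. ring.
Qed.

Lemma class_K_comp f g : class_K f -> class_K g -> class_K (fun x => f (g x)).
Proof.
  intros Hf Hg. pose proof Hf as [Hfcont [Hfincr Hf0]]. pose proof Hg as [Hgcont [Hgincr Hg0]].
  split; [|split].
  - apply cont_on_nonneg_comp; auto. intros; apply K_ge0; auto.
  - intros x y Hx Hxy. apply Hfincr; [apply K_ge0|apply Hgincr]; auto.
  - rewrite Hg0. exact Hf0.
Qed.

Lemma class_Kinf_id_plus g : class_K g -> class_Kinf (fun x => x + g x).
Proof.
  intros Hg. pose proof Hg as [Hcont [Hincr Hg0]]. split; [split; [|split]|].
  - apply cont_on_nonneg_plus; [apply cont_on_nonneg_id|exact Hcont].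
  - intros x y Hx Hxy. pose proof (Hincr x y Hx Hxy). lra.
  - rewrite Hg0. ring.
  - intro M. exists (Rmax 0 M + 1). pose proof (Rmax_l 0 M). pose proof (Rmax_r 0 M).
    pose proof (K_ge0 g (Rmax 0 M + 1) Hg ltac:(lra)). split; lra.
Qed.

Section ReciprocalConjugate.
Variable H : R -> R.
Hypothesis H_cont : forall x, 0 < x -> continuity_pt H x.
Hypothesis H_expanding : forall x y, 0 <= x <= y -> y - x <= H y - H x.
Hypothesis H_0 : H 0 = 0.

(* The faster [H] grows at infinity, the flatter [recip_conj H] is at 0. *)
Definition recip_conj (v : R) : R := if Rle_dec v 0 then 0 else / H (/ v).

Lemma expanding_ge_id y : 0 <= y -> y <= H y.
Proof. intros Hy. pose proof (H_expanding 0 y ltac:(lra)). lra. Qed.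

Lemma recip_conj_inv y : 0 < y -> recip_conj (/ y) = / H y.
Proof.
  intros Hy. pose proof (Rinv_0_lt_compat y Hy). unfold recip_conj.
  destruct (Rle_dec (/ y) 0); [lra|]. rewrite Rinv_inv. reflexivity.
Qed.

Lemma recip_conj_pos v : 0 < v -> 0 < recip_conj v.
Proof.
  intros Hv. pose proof (Rinv_0_lt_compat v Hv). unfold recip_conj.
  destruct (Rle_dec v 0); [lra|]. pose proof (expanding_ge_id (/ v) ltac:(lra)).
  apply Rinv_0_lt_compat. lra.
Qed.

Lemma recip_conj_le v : 0 < v -> recip_conj v <= v.
Proof.
  intros Hv. pose proof (Rinv_0_lt_compat v Hv). unfold recip_conj.
  destruct (Rle_dec v 0); [lra|]. pose proof (expanding_ge_id (/ v) ltac:(lra)).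
  rewrite <- (Rinv_inv v) at 2. apply Rinv_le_contravar; lra.
Qed.

Lemma recip_conj_0 : recip_conj 0 = 0.
Proof. unfold recip_conj. destruct (Rle_dec 0 0); lra. Qed.

Lemma recip_conj_cont_0 : continuity_pt (fun y => recip_conj (Rmax 0 y)) 0.
Proof.
  intros eps Heps. exists eps. split; [lra|]. intros y [_ Hy]. simpl in Hy |- *. unfold Rdist in Hy |- *.
  rewrite (Rmax_left 0 0), recip_conj_0, Rminus_0_r by lra. rewrite Rminus_0_r in Hy.
  unfold Rmax. destruct (Rle_dec 0 y) as [Hy0|Hy0]; [|rewrite recip_conj_0, Rabs_R0; lra].
  destruct (Req_dec y 0) as [->|Hne]; [rewrite recip_conj_0, Rabs_R0; lra|].
  pose proof (recip_conj_pos y ltac:(lra)). pose proof (recip_conj_le y ltac:(lra)).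
  rewrite Rabs_pos_eq in * by lra. lra.
Qed.

Lemma recip_conj_cont_pos x : 0 < x -> continuity_pt (fun y => recip_conj (Rmax 0 y)) x.
Proof.
  intros Hx. apply (continuity_pt_locally_ext (fun y => / H (/ y)) _ x x Hx).
  { intros y Hy. unfold Rdist in Hy.
    assert (0 < y) by (pose proof (Rle_abs (x - y)); rewrite Rabs_minus_sym in Hy; lra).
    rewrite Rmax_right by lra. unfold recip_conj. destruct (Rle_dec y 0); [lra|reflexivity]. }
  pose proof (Rinv_0_lt_compat x Hx).
  apply (continuity_pt_inv (fun y => H (/ y))).
  - apply (continuity_pt_comp (fun y => / y) H).
    + apply (continuity_pt_inv (fun y => y)); [apply continuity_pt_id|lra].
    + apply H_cont. lra.
  - pose proof (expanding_ge_id (/ x) ltac:(lra)). lra.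
Qed.

Lemma recip_conj_K : class_K recip_conj.
Proof.
  split; [|split].
  - apply cont_on_nonneg_of_continuity_pt. intros x Hx.
    destruct (Req_dec x 0) as [->|Hx0]; [apply recip_conj_cont_0|apply recip_conj_cont_pos; lra].
  - intros x y Hx Hxy. destruct (Req_dec x 0) as [->|Hx0].
    + rewrite recip_conj_0. apply recip_conj_pos; lra.
    + unfold recip_conj. destruct (Rle_dec x 0); [lra|]. destruct (Rle_dec y 0); [lra|].
      assert (Hinv : / y < / x) by (apply Rinv_lt_contravar; nra).
      pose proof (Rinv_0_lt_compat y ltac:(lra)).
      pose proof (H_expanding (/ y) (/ x) ltac:(lra)).
      pose proof (expanding_ge_id (/ y) ltac:(lra)).
      apply Rinv_lt_contravar; nra.
  - exact recip_conj_0.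
Qed.
End ReciprocalConjugate.

Lemma inv_pow2_le_inv_succ n : / 2 ^ n <= / (INR n + 1).
Proof.
  apply Rinv_le_contravar; [pose proof (pos_INR n); lra|].
  induction n as [|n IH]; [simpl; lra|]. rewrite S_INR. simpl. pose proof (pos_INR n). lra.
Qed.

Lemma RInt_staircase_le (g : R -> R) (T e : nat -> R) (A : R) (c : nat) :
  T O = 0 -> (forall j, T j <= T (S j)) -> (forall j, INR j <= T j) ->
  (forall a b, 0 <= a <= b -> ex_RInt g a b) -> (forall s, 0 <= s -> 0 <= g s) ->
  (forall s, 0 <= s <= T c -> g s <= A) ->
  (forall j s, (c <= j)%nat -> T j <= s <= T (S j) -> g s <= e j) ->
  (forall j, (c <= j)%nat -> e j * (T (S j) - T j) <= / 2 ^ j) ->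
  forall t, 0 <= t -> RInt g 0 t <= A * T c + 2 / 2 ^ c.
Proof.
  intros T0 T_step T_ge Hint g_ge0 g_head g_tail e_tail t Ht.
  assert (T_le : forall i j, (i <= j)%nat -> T i <= T j)
    by (intros i j Hij; induction Hij; [lra|pose proof (T_step m); lra]).
  assert (T_ge0 : forall j, 0 <= T j) by (intro j; rewrite <- T0; apply T_le; lia).
  assert (pow_pos : forall j, 0 < 2 ^ j) by (intro; apply pow_lt; lra).
  assert (Hfinite : forall J, (c <= J)%nat -> RInt g 0 (T J) <= A * T c + 2 / 2 ^ c - 2 / 2 ^ J).
  { intros J HJ. induction HJ as [|m Hcm IH].
    - assert (Hhead : RInt g 0 (T c) <= RInt (fun _ => A) 0 (T c)).
      { apply RInt_le; [apply T_ge0|apply Hint; split; [lra|apply T_ge0]|apply ex_RInt_const|].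
        intros s Hs. apply g_head. lra. }
      rewrite RInt_const in Hhead. change (scal (T c - 0) A) with ((T c - 0) * A) in Hhead. lra.
    - rewrite <- (RInt_Chasles g 0 (T m) (T (S m))) by (apply Hint; pose proof (T_ge0 m); pose proof (T_step m); lra).
      assert (Hpiece : RInt g (T m) (T (S m)) <= RInt (fun _ => e m) (T m) (T (S m))).
      { apply RInt_le; [apply T_step|apply Hint; split; [apply T_ge0|apply T_step]|apply ex_RInt_const|].
        intros s Hs. apply g_tail; [lia|lra]. }
      rewrite RInt_const in Hpiece.
      change (scal (T (S m) - T m) (e m)) with ((T (S m) - T m) * e m) in Hpiece.
      change (plus (RInt g 0 (T m)) (RInt g (T m) (T (S m)))) with (RInt g 0 (T m) + RInt g (T m) (T (S m))).
      pose proof (e_tail m ltac:(lia)).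
      assert (2 / 2 ^ m - 2 / 2 ^ S m = / 2 ^ m) by (simpl; field; pose proof (pow_pos m); lra).
      lra. }
  set (J := Nat.max c (S (nat_floor t))).
  assert (Ht_le : t <= T J).
  { pose proof (nat_floor_spec t Ht). pose proof (T_ge J).
    assert (INR (S (nat_floor t)) <= INR J) by (apply le_INR; unfold J; lia). rewrite S_INR in *. lra. }
  specialize (Hfinite J ltac:(unfold J; lia)).
  rewrite <- (RInt_Chasles g 0 t (T J)) in Hfinite by (apply Hint; lra).
  change (plus (RInt g 0 t) (RInt g t (T J))) with (RInt g 0 t + RInt g t (T J)) in Hfinite.
  assert (0 <= RInt g t (T J)) by (apply RInt_ge_0; [lra|apply Hint; lra|intros s Hs; apply g_ge0; lra]).
  assert (0 < 2 / 2 ^ J) by (apply Rdiv_lt_0_compat; [lra|apply pow_pos]).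
  lra.
Qed.

Lemma RInt_le_plus_const (f g : R -> R) (c t : R) : 0 <= t ->
  cont_on_nonneg f -> cont_on_nonneg g -> (forall s, 0 <= s <= t -> f s <= g s + c) ->
  RInt f 0 t <= RInt g 0 t + t * c.
Proof.
  intros Ht Hf Hg Hfg.
  assert (Hgc : RInt (fun s => g s + c) 0 t = RInt g 0 t + t * c).
  { rewrite (RInt_plus g (fun _ => c)) by (apply cont_on_nonneg_ex_RInt; auto;
      apply cont_on_nonneg_const || lra).
    rewrite RInt_const. change (RInt g 0 t + (t - 0) * c = RInt g 0 t + t * c). ring. }
  rewrite <- Hgc. apply RInt_le; auto.
  - apply cont_on_nonneg_ex_RInt; auto. lra.
  - apply cont_on_nonneg_ex_RInt; [apply cont_on_nonneg_plus; auto; apply cont_on_nonneg_const|lra].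
  - intros s Hs. apply Hfg. lra.
Qed.

Section IntegralOfKL.
Variable beta : R -> R -> R.
Hypothesis beta_KL : class_KL beta.

Lemma KL_ge0 r s : 0 <= r -> 0 <= s -> 0 <= beta r s.
Proof. intros Hr Hs. apply (K_ge0 (fun r => beta r s)); auto. apply beta_KL; auto. Qed.

Lemma KL_le_l r r' s : 0 <= r -> r <= r' -> 0 <= s -> beta r s <= beta r' s.
Proof. intros Hr Hrr' Hs. apply (K_le (fun r => beta r s)); auto. apply beta_KL; auto. Qed.

Lemma KL_0_l s : 0 <= s -> beta 0 s = 0.
Proof. intros Hs. apply (proj1 beta_KL s Hs). Qed.

Lemma KL_le_r r s s' : 0 <= r -> 0 <= s -> s <= s' -> beta r s' <= beta r s.
Proof.
  intros Hr Hs Hss'. destruct (Req_dec r 0) as [->|Hr0]; [rewrite !KL_0_l by lra; lra|].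
  destruct (Req_dec s s') as [->|Hne]; [lra|].
  destruct (proj2 beta_KL r ltac:(lra)) as [_ [_ [Hdecr _]]]. apply Rlt_le, Hdecr; lra.
Qed.

Lemma KL_gt0 r : 0 < r -> 0 < beta r 0.
Proof.
  intros Hr. destruct (proj1 beta_KL 0 (Rle_refl 0)) as [_ [Hincr Hbeta0]].
  rewrite <- Hbeta0 at 1. apply Hincr; lra.
Qed.

Lemma KL_cont_r r : 0 <= r -> cont_on_nonneg (beta r).
Proof.
  intros Hr. destruct (Req_dec r 0) as [->|Hr0]; [|apply (proj2 beta_KL r ltac:(lra))].
  intros s eps Hs Heps. exists 1. split; [lra|]. intros s' Hs' _.
  rewrite !KL_0_l, Rminus_diag, Rabs_R0 by auto. lra.
Qed.

Lemma cont_on_nonneg_K_KL alpha r : class_K alpha -> 0 <= r ->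
  cont_on_nonneg (fun s => alpha (2 * beta r s)).
Proof.
  intros Halpha Hr. apply cont_on_nonneg_comp; [apply Halpha| |].
  - apply cont_on_nonneg_mult; [apply cont_on_nonneg_const|apply KL_cont_r; auto].
  - intros s Hs. pose proof (KL_ge0 r s Hr Hs). lra.
Qed.

Lemma KL_tail_times : exists tau : nat -> R, (forall j, 0 <= tau j) /\
  forall j s, tau j <= s -> 2 * beta (INR (S j)) s <= / INR (S j).
Proof.
  destruct (ClassicalEpsilon.choice (fun (j : nat) (tau : R) => 0 <= tau /\
    forall s, tau <= s -> 2 * beta (INR (S j)) s <= / INR (S j))) as [tau Htau].
  - intros j. assert (Hj : 0 < INR (S j)) by (apply lt_0_INR; lia).
    destruct (proj2 beta_KL _ Hj) as [_ [_ [_ Hlim]]].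
    destruct (Hlim (/ (2 * INR (S j)))) as [T HT]; [apply Rinv_0_lt_compat; lra|].
    exists (Rmax 0 T). split; [apply Rmax_l|]. intros s Hs.
    assert (Hbeta := HT s ltac:(pose proof (Rmax_r 0 T); lra)).
    pose proof (Rle_abs (beta (INR (S j)) s)).
    assert (/ (2 * INR (S j)) * 2 = / INR (S j)) by (field; lra). lra.
  - exists tau. split; intro j; apply Htau.
Qed.

Section TailTimes.
Variable tau : nat -> R.
Hypothesis tau_ge0 : forall j, 0 <= tau j.
Hypothesis tau_tail : forall j s, tau j <= s -> 2 * beta (INR (S j)) s <= / INR (S j).

Fixpoint tail_time (n : nat) : R :=
  match n with
  | O => 0
  | S i => tail_time i + 1 + tau i
  end.

Lemma tail_time_step j : tail_time j <= tail_time (S j).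
Proof. simpl. pose proof (tau_ge0 j). lra. Qed.

Lemma tail_time_ge_INR j : INR j <= tail_time j.
Proof. induction j as [|j IH]; [simpl; lra|]. rewrite S_INR. simpl. pose proof (tau_ge0 j). lra. Qed.

Lemma tail_time_ge0 j : 0 <= tail_time j.
Proof. pose proof (tail_time_ge_INR j). pose proof (pos_INR j). lra. Qed.

Section Alpha.
Variable H : R -> R.
Hypothesis H_cont : forall x, 0 < x -> continuity_pt H x.
Hypothesis H_expanding : forall x y, 0 <= x <= y -> y - x <= H y - H x.
Hypothesis H_0 : H 0 = 0.
Hypothesis H_dom : forall k, 2 ^ S k * (tail_time (S (S k)) + 1) <= H (INR (S k)).

Let alpha := recip_conj H.

Lemma alpha_K : class_K alpha.
Proof. apply recip_conj_K; auto. Qed.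

Lemma alpha_inv_nat k : alpha (/ INR (S k)) <= / (2 ^ S k * (tail_time (S (S k)) + 1)).
Proof.
  assert (Hk : 0 < INR (S k)) by (apply lt_0_INR; lia).
  unfold alpha. rewrite recip_conj_inv by auto. apply Rinv_le_contravar; [|apply H_dom].
  pose proof (pow_lt 2 (S k) ltac:(lra)). pose proof (tail_time_ge0 (S (S k))). nra.
Qed.

Lemma alpha_beta_tail k r s : 0 <= r <= INR (S k) -> tail_time (S k) <= s ->
  alpha (2 * beta r s) <= / (2 ^ S k * (tail_time (S (S k)) + 1)).
Proof.
  intros [Hr Hrk] Hs. pose proof (tail_time_ge0 (S k)).
  assert (Htau : tau k <= s) by (simpl in Hs; pose proof (tail_time_ge0 k); lra).
  pose proof (KL_le_l r (INR (S k)) s Hr Hrk ltac:(lra)).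
  pose proof (KL_ge0 r s Hr ltac:(lra)). pose proof (tau_tail k s Htau).
  eapply Rle_trans; [|apply alpha_inv_nat]. apply K_le; [apply alpha_K|lra|lra].
Qed.

Lemma integral_alpha_beta_le c r t : (1 <= c)%nat -> 0 <= r <= INR c -> 0 <= t ->
  RInt (fun s => alpha (2 * beta r s)) 0 t <= alpha (2 * beta r 0) * tail_time c + 2 / 2 ^ c.
Proof.
  intros Hc [Hr Hrc] Ht.
  apply (RInt_staircase_le _ tail_time (fun j => / (2 ^ j * (tail_time (S j) + 1)))); auto.
  - exact tail_time_step.
  - exact tail_time_ge_INR.
  - intros a b Hab. apply cont_on_nonneg_ex_RInt; auto. apply cont_on_nonneg_K_KL; [apply alpha_K|auto].
  - intros s Hs. apply K_ge0; [apply alpha_K|]. pose proof (KL_ge0 r s Hr Hs). lra.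
  - intros s [Hs _]. pose proof (KL_le_r r 0 s Hr (Rle_refl 0) Hs). pose proof (KL_ge0 r s Hr Hs).
    apply K_le; [apply alpha_K|lra|lra].
  - intros j s Hcj Hs. destruct j as [|k]; [lia|]. apply alpha_beta_tail; [|lra].
    split; auto. apply (Rle_trans _ (INR c)); auto. apply le_INR; auto.
  - intros j _. pose proof (tail_time_ge0 j). pose proof (tail_time_step j).
    assert (Hpos : 0 < 2 ^ j * (tail_time (S j) + 1))
      by (pose proof (pow_lt 2 j ltac:(lra)); pose proof (tail_time_ge0 (S j)); nra).
    pose proof (pow_lt 2 j ltac:(lra)).
    apply (Rle_trans _ (/ (2 ^ j * (tail_time (S j) + 1)) * (2 ^ j * (tail_time (S j) + 1) / 2 ^ j))).
    + apply Rmult_le_compat_l; [apply Rlt_le, Rinv_0_lt_compat; auto|].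
      replace (2 ^ j * (tail_time (S j) + 1) / 2 ^ j) with (tail_time (S j) + 1) by (field; lra). lra.
    + right. field. split; lra.
Qed.

Lemma integral_alpha_beta_le_small m r t : (1 <= m)%nat -> 0 <= r <= INR m -> 0 <= t ->
  / (INR m + 1) < 2 * beta r 0 <= / INR m ->
  RInt (fun s => alpha (2 * beta r s)) 0 t <= 3 * (2 * beta r 0).
Proof.
  intros Hm Hr Ht [Hlo Hhi].
  pose proof (integral_alpha_beta_le m r t Hm Hr Ht) as Hint.
  destruct m as [|k]; [lia|].
  pose proof (tail_time_step (S k)). pose proof (tail_time_ge0 (S k)).
  set (T := tail_time (S k)) in *. set (T' := tail_time (S (S k))) in *.
  pose proof (pow_lt 2 (S k) ltac:(lra)). pose proof (inv_pow2_le_inv_succ (S k)).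
  pose proof (KL_ge0 r 0 (proj1 Hr) (Rle_refl 0)).
  assert (Halpha : alpha (2 * beta r 0) <= / (2 ^ S k * (T' + 1))).
  { eapply Rle_trans; [|apply alpha_inv_nat]. apply K_le; [apply alpha_K|lra|lra]. }
  assert (Hhead : alpha (2 * beta r 0) * T <= / 2 ^ S k).
  { pose proof (K_ge0 _ (2 * beta r 0) alpha_K ltac:(lra)).
    apply (Rle_trans _ (/ (2 ^ S k * (T' + 1)) * (T' + 1))).
    - apply Rmult_le_compat; lra.
    - right. field. lra. }
  assert (2 / 2 ^ S k = 2 * / 2 ^ S k) by (unfold Rdiv; ring).
  lra.
Qed.

Section Gain.
Variable Hp : R -> R.
Hypothesis Hp_cont : forall x, 0 < x -> continuity_pt Hp x.
Hypothesis Hp_expanding : forall x y, 0 <= x <= y -> y - x <= Hp y - Hp x.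
Hypothesis Hp_0 : Hp 0 = 0.
Hypothesis Hp_dom : forall k,
  INR (S k) * (alpha (2 * beta (INR (S k)) 0) * tail_time (S k) + 1) <= Hp (INR (S k)).

Definition integral_gain (r : R) : R := 2 * beta r 0 * (3 + Hp (r + 1)).

Lemma Hp_le x y : 0 <= x <= y -> Hp x <= Hp y.
Proof. intros Hxy. pose proof (Hp_expanding x y Hxy). lra. Qed.

Lemma integral_alpha_beta_le_large k r t : 0 <= r <= INR (S k) -> 0 <= t ->
  / INR (S k) < 2 * beta r 0 ->
  RInt (fun s => alpha (2 * beta r s)) 0 t <= 2 * beta r 0 * Hp (INR (S k)).
Proof.
  intros Hr Ht Hrho.
  pose proof (integral_alpha_beta_le (S k) r t ltac:(lia) Hr Ht) as Hint.
  set (G := alpha (2 * beta (INR (S k)) 0) * tail_time (S k) + 1).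
  assert (Hk : 0 < INR (S k)) by (apply lt_0_INR; lia).
  pose proof (tail_time_ge0 (S k)).
  pose proof (KL_le_l r (INR (S k)) 0 (proj1 Hr) (proj2 Hr) (Rle_refl 0)).
  pose proof (KL_ge0 r 0 (proj1 Hr) (Rle_refl 0)).
  assert (Halpha : alpha (2 * beta r 0) <= alpha (2 * beta (INR (S k)) 0))
    by (apply K_le; [apply alpha_K|lra|lra]).
  assert (Hpow : 2 / 2 ^ S k <= 1).
  { pose proof (inv_pow2_le_inv_succ (S k)).
    assert (/ (INR (S k) + 1) <= / 2) by (apply Rinv_le_contravar; [lra|]; rewrite S_INR; pose proof (pos_INR k); lra).
    unfold Rdiv. lra. }
  assert (Hint_G : RInt (fun s => alpha (2 * beta r s)) 0 t <= G).
  { pose proof (Rmult_le_compat_r (tail_time (S k)) _ _ ltac:(lra) Halpha). unfold G. lra. }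
  assert (HG : 0 <= G) by (unfold G; pose proof (K_ge0 _ (2 * beta (INR (S k)) 0) alpha_K ltac:(lra)); nra).
  assert (Hn_rho : 1 < INR (S k) * (2 * beta r 0)).
  { apply (Rmult_lt_compat_l (INR (S k))) in Hrho; auto. rewrite Rinv_r in Hrho; lra. }
  pose proof (Hp_dom k) as Hdom. fold G in Hdom.
  pose proof (Rmult_le_compat_l (2 * beta r 0) _ _ ltac:(lra) Hdom). nra.
Qed.

Lemma integral_alpha_beta_le_gain r t : 0 <= r -> 0 <= t ->
  RInt (fun s => alpha (2 * beta r s)) 0 t <= integral_gain r.
Proof.
  intros Hr Ht. unfold integral_gain.
  destruct (Req_dec r 0) as [->|Hr0].
  - rewrite (RInt_ext _ (fun _ => 0)).
    + rewrite RInt_const, KL_0_l by lra. change (scal (t - 0) 0) with ((t - 0) * 0). lra.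
    + intros s Hs. rewrite Rmin_left in Hs by lra. rewrite KL_0_l, Rmult_0_r by lra.
      apply recip_conj_0.
  - assert (Hrho : 0 < 2 * beta r 0) by (pose proof (KL_gt0 r ltac:(lra)); lra).
    pose proof (nat_floor_spec r Hr) as Fr. set (k := nat_floor r) in *.
    assert (Hk : 0 < INR (S k)) by (apply lt_0_INR; lia).
    assert (Hrk : r <= INR (S k)) by (rewrite S_INR; lra).
    pose proof (expanding_ge_id Hp Hp_expanding Hp_0 (r + 1) ltac:(lra)).
    assert (Hp_k : Hp (INR (S k)) <= Hp (r + 1)) by (apply Hp_le; rewrite S_INR; lra).
    destruct (Rle_or_lt (2 * beta r 0) (/ INR (S k))) as [Hsmall|Hlarge].
    (* Cutting at [m = floor (1 / (2 beta r 0))] makes the bound vanish as [r -> 0]. *)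
    + pose proof (Rinv_0_lt_compat _ Hrho).
      assert (Hk_inv : INR (S k) <= / (2 * beta r 0)).
      { rewrite <- (Rinv_inv (INR (S k))). apply Rinv_le_contravar; auto. }
      pose proof (nat_floor_spec (/ (2 * beta r 0)) ltac:(lra)) as Fm.
      set (m := nat_floor (/ (2 * beta r 0))) in *.
      assert (Hkm : (S k <= m)%nat).
      { rewrite <- (nat_floor_unique (S k) (INR (S k))) by lra. apply nat_floor_le; lra. }
      assert (Hm : 0 < INR m) by (apply lt_0_INR; lia).
      assert (INR (S k) <= INR m) by (apply le_INR; auto).
      eapply Rle_trans; [apply (integral_alpha_beta_le_small m); auto; try lia; try lra|nra].
      split.
      * rewrite <- (Rinv_inv (2 * beta r 0)). apply Rinv_lt_contravar; [nra|lra].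
      * rewrite <- (Rinv_inv (2 * beta r 0)). apply Rinv_le_contravar; lra.
    + eapply Rle_trans; [apply (integral_alpha_beta_le_large k); auto; lra|nra].
Qed.

Lemma integral_gain_K : class_K integral_gain.
Proof.
  pose proof (proj1 beta_KL 0 (Rle_refl 0)) as beta0_K.
  assert (Hp_ge0 : forall r, 0 <= r -> 0 <= Hp (r + 1))
    by (intros r Hr; pose proof (expanding_ge_id Hp Hp_expanding Hp_0 (r + 1) ltac:(lra)); lra).
  split; [|split].
  - unfold integral_gain. apply cont_on_nonneg_mult.
    + apply cont_on_nonneg_mult; [apply cont_on_nonneg_const|apply beta0_K].
    + apply cont_on_nonneg_plus; [apply cont_on_nonneg_const|].
      apply (cont_on_nonneg_comp_continuity_pt Hp (fun r => r + 1)).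
      * intros x Hx. apply Hp_cont. lra.
      * apply cont_on_nonneg_plus; [apply cont_on_nonneg_id|apply cont_on_nonneg_const].
  - intros x y Hx Hxy. unfold integral_gain.
    pose proof (proj1 (proj2 beta0_K) x y Hx Hxy). pose proof (KL_ge0 x 0 Hx (Rle_refl 0)).
    pose proof (Hp_le (x + 1) (y + 1) ltac:(lra)). pose proof (Hp_ge0 x Hx). nra.
  - unfold integral_gain. rewrite KL_0_l by lra. ring.
Qed.
End Gain.
End Alpha.
End TailTimes.
End IntegralOfKL.

Lemma KL_integral_bound beta : class_KL beta -> exists alpha gain : R -> R,
  class_K alpha /\ class_K gain /\
  forall r t, 0 <= r -> 0 <= t -> RInt (fun s => alpha (2 * beta r s)) 0 t <= gain r.
Proof.
  intros beta_KL. destruct (KL_tail_times beta beta_KL) as [tau [tau_ge0 tau_tail]].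
  destruct (exists_dominating_function (fun j => 2 ^ j * (tail_time tau (S j) + 1)))
    as [H [H_cont [H_expanding [H_0 H_dom]]]].
  destruct (exists_dominating_function
    (fun n => INR n * (recip_conj H (2 * beta (INR n) 0) * tail_time tau n + 1)))
    as [Hp [Hp_cont [Hp_expanding [Hp_0 Hp_dom]]]].
  exists (recip_conj H), (integral_gain beta Hp). split; [|split].
  - apply recip_conj_K; auto.
  - apply integral_gain_K; auto.
  - intros r t Hr Ht. apply (integral_alpha_beta_le_gain beta beta_KL tau tau_ge0 tau_tail H); auto.
Qed.

Theorem mainTheorem1 (X U UU : NormedSpace) (ev : UU -> R -> U)
    (phi : R -> X -> UU -> X) :
  Banach X -> Banach U ->
  input_function_space U UU ev ->
  forward_complete_control_system X U UU ev phi ->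
  ISS X U UU ev phi ->
  norm_to_integral_ISS X U UU ev phi.
Proof.
  intros _ _ _ [_ [_ [phi_cont _]]] [beta [gamma [beta_KL [gamma_K iss]]]].
  destruct (KL_integral_bound beta beta_KL) as [alpha [gain [alpha_K [gain_K Hgain]]]].
  assert (sigma_K : class_K (fun w => alpha (2 * gamma w)))
    by (apply class_K_comp; [|apply class_K_scal; [lra|]]; auto).
  exists alpha, (fun r => r + gain r), (fun w => w + alpha (2 * gamma w)).
  split; [exact alpha_K|split; [apply class_Kinf_id_plus, gain_K|split; [apply class_Kinf_id_plus, sigma_K|]]].
  intros x u t Ht.
  pose proof (ns_norm_ge0 X x) as Hr. pose proof (ns_norm_ge0 UU u) as Hw.
  assert (f_cont : cont_on_nonneg (fun s => alpha (ns_norm (phi s x u)))).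
  { apply cont_on_nonneg_comp; [apply alpha_K| |intros; apply ns_norm_ge0].
    apply cont_on_nonneg_norm. intros; apply phi_cont; auto. }
  exists (ex_RInt_Reals_0 _ _ _ (cont_on_nonneg_ex_RInt _ 0 t f_cont ltac:(lra))).
  rewrite <- RInt_Reals.
  eapply Rle_trans; [apply (RInt_le_plus_const _ (fun s => alpha (2 * beta (ns_norm x) s))
    (alpha (2 * gamma (ns_norm u)))); auto|].
  - apply cont_on_nonneg_K_KL; auto.
  - intros s [Hs _]. pose proof (iss x u s Hs). pose proof (ns_norm_ge0 X (phi s x u)).
    eapply Rle_trans; [apply K_le; eauto|].
    apply K_add_le; auto; [apply KL_ge0|apply K_ge0]; auto.
  - pose proof (Hgain (ns_norm x) t Hr Ht). pose proof (Rmult_le_pos t (ns_norm u) Ht Hw). lra.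
Qed.
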